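(* Let $\mathcal D$ be a semicartesian symmetric monoidal category. Then the following are equivalent: (1) $\mathcal D$ can be equipped with copy morphisms making it into a positive Markov category (with discard morphisms the unique morphisms to $I$). (2) For every object $X$, the identity $\mathrm{id}_X$ admits an initial dilation $\iota\colon X\to X\otimes E$ such that the marginal $(\mathrm{del}_X\otimes\mathrm{id}_E)\circ\iota\colon X\to E$ is non-creative; and moreover, every morphism $f\colon X\to Y$ with the following property is non-creative: for every dilation $\pi\colon Y\to Y\otimes E$ of $\mathrm{id}_Y$ there is a dilation $\pi'\colon X\to X\otimes E$ of $\mathrm{id}_X$ with $\pi\circ f=(f\otimes\mathrm{id}_E)\circ\pi'$.
   Context: A symmetric monoidal category $(\mathcal D,\otimes,I)$ is semicartesian if $I$ is terminal; write $\mathrm{del}_X\colon X\to I$ for the unique morphism (unitors suppressed). A Markov category is a symmetric monoidal category in which every object $X$ carries morphisms $\mathrm{copy}_X\colon X\to X\otimes X$ and $\mathrm{del}_X\colon X\to I$ forming a commutative comonoid, compatible with the monoidal structure ($\mathrm{copy}_{X\otimes Y}$ is $\mathrm{copy}_X\otimes\mathrm{copy}_Y$ followed by swapping the middle factors, $\mathrm{del}_{X\otimes Y}=\mathrm{del}_X\otimes\mathrm{del}_Y$), with $I$ terminal. A morphism $f\colon A\to X$ in it is deterministic if $\mathrm{copy}_X\circ f=(f\otimes f)\circ\mathrm{copy}_A$. The Markov category is positive if for all $f\colon X\to Y$, $g\colon Y\to Z$ with $g\circ f$ deterministic, $(\mathrm{id}_Y\otimes g)\circ\mathrm{copy}_Y\circ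 f=(f\otimes (g\circ f))\circ\mathrm{copy}_X$. In a semicartesian category: a dilation of $p\colon A\to X$ is a morphism $\pi\colon A\to X\otimes E$ with $(\mathrm{id}_X\otimes\mathrm{del}_E)\circ\pi=p$. Given a dilation $\pi\colon A\to X\otimes E$ and $f_1,f_2\colon E\to E'$, these are $\pi$-dilationally equal if for every dilation $\rho\colon A\to X\otimes E\otimes F$ of $\pi$, $(\mathrm{id}_X\otimes f_1\otimes\mathrm{id}_F)\circ\rho=(\mathrm{id}_X\otimes f_2\otimes\mathrm{id}_F)\circ\rho$. A dilation $\pi\colon A\to X\otimes E$ of $p$ is initial if for every dilation $\pi'\colon A\to X\otimes E'$ of $p$ there is $f\colon E\to E'$ with $(\mathrm{id}_X\otimes f)\circ\pi=\pi'$, unique up to $\pi$-dilational equality. A morphism $p\colon A\to X$ is non-creative if every dilation $\pi\colon A\to X\otimes E$ of $p$ equals $(p\otimes\mathrm{id}_E)\circ\iota$ for some dilation $\iota\colon A\to A\otimes E$ of $\mathrm{id}_A$. *)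

Set Implicit Arguments.
Unset Strict Implicit.

Record SemicartSMC := {
  ob : Type;
  hom : ob -> ob -> Type;
  comp : forall A B C : ob, hom B C -> hom A B -> hom A C;
  idm : forall A : ob, hom A A;
  comp_id_l : forall A B (f : hom A B), comp (idm B) f = f;
  comp_id_r : forall A B (f : hom A B), comp f (idm A) = f;
  comp_assoc : forall A B C D (f : hom A B) (g : hom B C) (h : hom C D),
      comp h (comp g f) = comp (comp h g) f;

  tens : ob -> ob -> ob;
  tensm : forall A B C D : ob, hom A B -> hom C D -> hom (tens A C) (tens B D);
  unit : ob;
  tensm_id : forall A B, tensm (idm A) (idm B) = idm (tens A B);
  tensm_comp : forall A B C A' B' C' (f : hom A B) (g : hom B C)
      (f' : hom A' B') (g' : hom B' C'),
      tensm (comp g f) (comp g' f') = comp (tensm g g') (tensm f f');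

  assoc : forall A B C, hom (tens (tens A B) C) (tens A (tens B C));
  assoc_inv : forall A B C, hom (tens A (tens B C)) (tens (tens A B) C);
  lunit : forall A, hom (tens unit A) A;
  lunit_inv : forall A, hom A (tens unit A);
  runit : forall A, hom (tens A unit) A;
  runit_inv : forall A, hom A (tens A unit);
  braid : forall A B, hom (tens A B) (tens B A);

  assoc_iso1 : forall A B C, comp (assoc_inv A B C) (assoc A B C) = idm _;
  assoc_iso2 : forall A B C, comp (assoc A B C) (assoc_inv A B C) = idm _;
  lunit_iso1 : forall A, comp (lunit_inv A) (lunit A) = idm _;
  lunit_iso2 : forall A, comp (lunit A) (lunit_inv A) = idm _;
  runit_iso1 : forall A, comp (runit_inv A) (runit A) = idm _;
  runit_iso2 : forall A, comp (runit A) (runit_inv A) = idm _;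

  assoc_nat : forall A A' B B' C C' (f : hom A A') (g : hom B B') (h : hom C C'),
      comp (assoc A' B' C') (tensm (tensm f g) h)
      = comp (tensm f (tensm g h)) (assoc A B C);
  lunit_nat : forall A A' (f : hom A A'),
      comp (lunit A') (tensm (idm unit) f) = comp f (lunit A);
  runit_nat : forall A A' (f : hom A A'),
      comp (runit A') (tensm f (idm unit)) = comp f (runit A);
  braid_nat : forall A A' B B' (f : hom A A') (g : hom B B'),
      comp (braid A' B') (tensm f g) = comp (tensm g f) (braid A B);

  pentagon : forall A B C D,
      comp (assoc A B (tens C D)) (assoc (tens A B) C D)
      = comp (tensm (idm A) (assoc B C D))
          (comp (assoc A (tens B C) D) (tensm (assoc A B C) (idm D)));
  triangle : forall A B,
      tensm (runit A) (idm B) = comp (tensm (idm A) (lunit B)) (assoc A unit B);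
  hexagon : forall A B C,
      comp (assoc B C A) (comp (braid A (tens B C)) (assoc A B C))
      = comp (tensm (idm B) (braid A C))
          (comp (assoc B A C) (tensm (braid A B) (idm C)));
  braid_sym : forall A B, comp (braid B A) (braid A B) = idm (tens A B);

  del : forall A, hom A unit;
  del_unique : forall A (f : hom A unit), f = del A
}.

Arguments hom : clear implicits.
Arguments ob : clear implicits.
Arguments comp {s A B C} _ _.
Arguments idm {s} A.
Arguments tens {s} _ _.
Arguments tensm {s A B C D} _ _.
Arguments unit {s}.
Arguments assoc {s} A B C.
Arguments assoc_inv {s} A B C.
Arguments lunit {s} A.
Arguments lunit_inv {s} A.
Arguments runit {s} A.
Arguments runit_inv {s} A.
Arguments braid {s} A B.
Arguments del {s} A.

Section Defs.
Variable D : SemicartSMC.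

Definition middle_swap (X Y : ob D) :
  hom D (tens (tens X X) (tens Y Y)) (tens (tens X Y) (tens X Y)) :=
  comp (assoc_inv X Y (tens X Y))
   (comp (tensm (idm X)
            (comp (assoc Y X Y) (comp (tensm (braid X Y) (idm Y)) (assoc_inv X Y Y))))
     (assoc X X (tens Y Y))).

Definition is_Markov_copy (copy : forall X : ob D, hom D X (tens X X)) : Prop :=
  (forall X, comp (lunit X) (comp (tensm (del X) (idm X)) (copy X)) = idm X) /\
  (forall X, comp (runit X) (comp (tensm (idm X) (del X)) (copy X)) = idm X) /\
  (forall X, comp (assoc X X X) (comp (tensm (copy X) (idm X)) (copy X))
             = comp (tensm (idm X) (copy X)) (copy X)) /\
  (forall X, comp (braid X X) (copy X) = copy X) /\
  (forall X Y, copy (tens X Y) = comp (middle_swap X Y) (tensm (copy X) (copy Y))) /\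
  (forall X Y : ob D, del (tens X Y) = comp (lunit unit) (tensm (del X) (del Y))).

Definition deterministic (copy : forall X : ob D, hom D X (tens X X))
  (A X : ob D) (f : hom D A X) : Prop :=
  comp (copy X) f = comp (tensm f f) (copy A).

Definition positive (copy : forall X : ob D, hom D X (tens X X)) : Prop :=
  forall (X Y Z : ob D) (f : hom D X Y) (g : hom D Y Z),
    deterministic copy (comp g f) ->
    comp (tensm (idm Y) g) (comp (copy Y) f) = comp (tensm f (comp g f)) (copy X).

Definition dilation_of (A X E : ob D) (p : hom D A X) (pi : hom D A (tens X E)) : Prop :=
  comp (runit X) (comp (tensm (idm X) (del E)) pi) = p.

Definition dil_equal (A X E E' : ob D) (pi : hom D A (tens X E))
  (f1 f2 : hom D E E') : Prop :=
  forall (F : ob D) (rho : hom D A (tens (tens X E) F)),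
    dilation_of pi rho ->
    comp (tensm (tensm (idm X) f1) (idm F)) rho
    = comp (tensm (tensm (idm X) f2) (idm F)) rho.

Definition initial_dilation (A X E : ob D) (p : hom D A X) (pi : hom D A (tens X E)) : Prop :=
  dilation_of p pi /\
  forall (E' : ob D) (pi' : hom D A (tens X E')),
    dilation_of p pi' ->
    (exists f : hom D E E', comp (tensm (idm X) f) pi = pi') /\
    (forall f1 f2 : hom D E E',
        comp (tensm (idm X) f1) pi = pi' ->
        comp (tensm (idm X) f2) pi = pi' ->
        dil_equal pi f1 f2).

Definition non_creative (A X : ob D) (p : hom D A X) : Prop :=
  forall (E : ob D) (pi : hom D A (tens X E)),
    dilation_of p pi ->
    exists iota : hom D A (tens A E),
      dilation_of (idm A) iota /\ pi = comp (tensm p (idm E)) iota.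

Definition lifts_id_dilations (X Y : ob D) (f : hom D X Y) : Prop :=
  forall (E : ob D) (pi : hom D Y (tens Y E)),
    dilation_of (idm Y) pi ->
    exists pi' : hom D X (tens X E),
      dilation_of (idm X) pi' /\ comp pi f = comp (tensm f (idm E)) pi'.

End Defs.

From Corelib Require Import ssreflect.
From Stdlib Require Import ClassicalEpsilon.

(* A morphism [c : X -> X ⊗ X] is a universal copy when both its marginals are
   the identity and every dilation of [id_X] has the form [(id ⊗ h) ∘ c].  A
   universal copy is determined by its marginals, so each comonoid law of a
   Markov category holds simply because both of its sides have identity
   marginals; and for a universal copy, lifting all dilations of identities is
   the same as being deterministic.

   In a positive Markov category, any [psi] with deterministic first marginal
   is the copy of its two marginals.  Hence [copy] is universal, so it is an
   initial dilation of the identity, and deterministic morphisms are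
   non-creative.

   Conversely, if [iota] is an initial dilation of [id_X] with non-creative
   marginal [m], non-creativity of [m] applied to the swapped dilation
   [braid ∘ iota] of [m] gives [c] with [iota = (id ⊗ m) ∘ c], and initiality
   of [iota] makes [c] universal.  Positivity follows since deterministic
   morphisms lift dilations of identities, hence are non-creative, and a
   non-creative deterministic [g ∘ f] splits [(id ⊗ g) ∘ copy ∘ f] as
   [(f ⊗ g ∘ f) ∘ copy]. *)

Section Semicartesian.
Context {D : SemicartSMC}.
Local Notation "g ∘ f" := (comp g f) (at level 40, left associativity).
Local Notation "f ⊗ g" := (tensm f g) (at level 30, right associativity).
Local Notation I := (@unit D).

(** * Coherence *)

Lemma comp_assoc_eq {A B C Z : ob D} {a : hom D B C} {b : hom D A B} {c : hom D A C} :
  a ∘ b = c -> forall x : hom D Z A, a ∘ (b ∘ x) = c ∘ x.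
Proof. by move=> H x; rewrite comp_assoc H. Qed.

Lemma comp_tensm {A B C A' B' C' : ob D} (f : hom D B C) (h : hom D A B)
    (g : hom D B' C') (k : hom D A' B') :
  (f ⊗ g) ∘ (h ⊗ k) = (f ∘ h) ⊗ (g ∘ k).
Proof. by rewrite tensm_comp. Qed.

Lemma tensm_compl {A B E C : ob D} (f : hom D A B) (g : hom D B E) :
  (g ∘ f) ⊗ idm C = (g ⊗ idm C) ∘ (f ⊗ idm C).
Proof. by rewrite comp_tensm comp_id_l. Qed.

Lemma tensm_compr {A B E C : ob D} (f : hom D A B) (g : hom D B E) :
  idm C ⊗ (g ∘ f) = (idm C ⊗ g) ∘ (idm C ⊗ f).
Proof. by rewrite comp_tensm comp_id_l. Qed.

Lemma tensm_idl_idr {A B C E : ob D} (f : hom D A B) (g : hom D C E) :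
  f ⊗ g = (f ⊗ idm E) ∘ (idm A ⊗ g).
Proof. by rewrite comp_tensm comp_id_l comp_id_r. Qed.

Lemma tensm_idr_idl {A B C E : ob D} (f : hom D A B) (g : hom D C E) :
  f ⊗ g = (idm B ⊗ g) ∘ (f ⊗ idm C).
Proof. by rewrite comp_tensm comp_id_l comp_id_r. Qed.

Lemma hom_unit_eq {A : ob D} (f g : hom D A I) : f = g.
Proof. by rewrite (del_unique f) (del_unique g). Qed.

Lemma assoc_inv_nat {A A' B B' C C' : ob D}
    (f : hom D A A') (g : hom D B B') (h : hom D C C') :
  assoc_inv A' B' C' ∘ (f ⊗ (g ⊗ h)) = ((f ⊗ g) ⊗ h) ∘ assoc_inv A B C.
Proof.
rewrite -[assoc_inv A' B' C' ∘ _]comp_id_r -(assoc_iso2 A B C) !comp_assoc.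
by rewrite -(comp_assoc _ _ (assoc_inv A' B' C')) -assoc_nat comp_assoc assoc_iso1 comp_id_l.
Qed.

Lemma tensm_unit_injl {A B : ob D} (f g : hom D A B) : idm I ⊗ f = idm I ⊗ g -> f = g.
Proof.
have lunit_conj h : h = lunit B ∘ (idm I ⊗ h) ∘ lunit_inv A.
  by rewrite lunit_nat -comp_assoc lunit_iso2 comp_id_r.
by move=> fg; rewrite (lunit_conj f) (lunit_conj g) fg.
Qed.

Lemma tensm_unit_injr {A B : ob D} (f g : hom D A B) : f ⊗ idm I = g ⊗ idm I -> f = g.
Proof.
have runit_conj h : h = runit B ∘ (h ⊗ idm I) ∘ runit_inv A.
  by rewrite runit_nat -comp_assoc runit_iso2 comp_id_r.
by move=> fg; rewrite (runit_conj f) (runit_conj g) fg.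
Qed.

(* Kelly's lemmas: both sides are compared after tensoring with [I], where the
   pentagon and triangle (resp. hexagon) apply. *)
Lemma lunit_assoc (B C : ob D) : lunit (tens B C) ∘ assoc I B C = lunit B ⊗ idm C.
Proof.
set Z := assoc I (tens I B) C ∘ (assoc I I B ⊗ idm C).
set Zi := (assoc_inv I I B ⊗ idm C) ∘ assoc_inv I (tens I B) C.
have ZZi : Z ∘ Zi = idm _.
  rewrite /Z /Zi -comp_assoc (comp_assoc_eq (comp_tensm _ _ _ _)) assoc_iso2.
  by rewrite comp_id_l tensm_id comp_id_l assoc_iso2.
have eqZ : (idm I ⊗ (lunit (tens B C) ∘ assoc I B C)) ∘ Z
         = (idm I ⊗ (lunit B ⊗ idm C)) ∘ Z.
  rewrite /Z -{1}(comp_id_l (idm I)) tensm_comp -!comp_assoc -pentagon comp_assoc.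
  rewrite -triangle -tensm_id -assoc_nat triangle tensm_compl comp_assoc assoc_nat.
  by rewrite -comp_assoc.
apply: tensm_unit_injl.
rewrite -[LHS]comp_id_r -[RHS]comp_id_r -ZZi.
by rewrite (comp_assoc Zi Z) (comp_assoc Zi Z) eqZ.
Qed.

Lemma runit_assoc (A B : ob D) : (idm A ⊗ runit B) ∘ assoc A B I = runit (tens A B).
Proof.
apply: tensm_unit_injr.
have eq_assoc : assoc A B I ∘ (((idm A ⊗ runit B) ∘ assoc A B I) ⊗ idm I)
              = assoc A B I ∘ (runit (tens A B) ⊗ idm I).
  rewrite triangle -tensm_id comp_assoc assoc_nat -comp_assoc pentagon.
  rewrite [RHS]comp_assoc -tensm_compr -triangle [RHS]comp_assoc -assoc_nat.
  by rewrite -[RHS]comp_assoc -tensm_compl.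
rewrite -[LHS]comp_id_l -[RHS]comp_id_l -(assoc_iso1 A B I).
by rewrite -!comp_assoc eq_assoc.
Qed.

Lemma lunit_braid (A : ob D) : lunit A ∘ braid A I = runit A.
Proof.
apply: tensm_unit_injr.
have eq_braid : braid A I ∘ (runit A ⊗ idm I)
              = braid A I ∘ ((lunit A ∘ braid A I) ⊗ idm I).
  rewrite triangle [LHS]comp_assoc braid_nat -lunit_assoc -!comp_assoc hexagon.
  rewrite comp_assoc lunit_nat -comp_assoc (comp_assoc_eq (lunit_assoc _ _)).
  by rewrite -tensm_compl.
rewrite -[LHS]comp_id_l -[RHS]comp_id_l -(braid_sym A I).
by rewrite -!comp_assoc eq_braid.
Qed.

Lemma runit_braid (B : ob D) : runit B ∘ braid I B = lunit B.
Proof. by rewrite -lunit_braid -comp_assoc braid_sym comp_id_r. Qed.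

(** * Marginal projections *)

Definition fstm (A B : ob D) : hom D (tens A B) A := locked (runit A ∘ (idm A ⊗ del B)).
Definition sndm (A B : ob D) : hom D (tens A B) B := locked (lunit B ∘ (del A ⊗ idm B)).

Lemma fstmE (A B : ob D) : fstm A B = runit A ∘ (idm A ⊗ del B).
Proof. by rewrite /fstm -lock. Qed.

Lemma sndmE (A B : ob D) : sndm A B = lunit B ∘ (del A ⊗ idm B).
Proof. by rewrite /sndm -lock. Qed.

Lemma dilation_ofE {A X E : ob D} (p : hom D A X) (pi : hom D A (tens X E)) :
  dilation_of p pi <-> fstm X E ∘ pi = p.
Proof. by rewrite /dilation_of fstmE comp_assoc. Qed.

Lemma marginalE {X E : ob D} (iota : hom D X (tens X E)) :
  lunit E ∘ ((del X ⊗ idm E) ∘ iota) = sndm X E ∘ iota.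
Proof. by rewrite sndmE comp_assoc. Qed.

Lemma fstm_tensm {A A' B B' : ob D} (f : hom D A A') (g : hom D B B') :
  fstm A' B' ∘ (f ⊗ g) = f ∘ fstm A B.
Proof.
rewrite !fstmE -comp_assoc comp_tensm comp_id_l (hom_unit_eq (del _ ∘ g) (del _)).
by rewrite tensm_idl_idr comp_assoc runit_nat -comp_assoc.
Qed.

Lemma sndm_tensm {A A' B B' : ob D} (f : hom D A A') (g : hom D B B') :
  sndm A' B' ∘ (f ⊗ g) = g ∘ sndm A B.
Proof.
rewrite !sndmE -comp_assoc comp_tensm comp_id_l (hom_unit_eq (del _ ∘ f) (del _)).
by rewrite tensm_idr_idl comp_assoc lunit_nat -comp_assoc.
Qed.

Lemma fstm_braid (A B : ob D) : fstm B A ∘ braid A B = sndm A B.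
Proof. by rewrite !fstmE !sndmE -comp_assoc -braid_nat comp_assoc runit_braid. Qed.

Lemma sndm_braid (A B : ob D) : sndm B A ∘ braid A B = fstm A B.
Proof. by rewrite !fstmE !sndmE -comp_assoc -braid_nat comp_assoc lunit_braid. Qed.

Lemma tensm_fstm_assoc (A B C : ob D) :
  (idm A ⊗ fstm B C) ∘ assoc A B C = fstm (tens A B) C.
Proof. by rewrite !fstmE tensm_compr -comp_assoc -assoc_nat comp_assoc runit_assoc tensm_id. Qed.

Lemma tensm_sndm_assoc (A B C : ob D) :
  (idm A ⊗ sndm B C) ∘ assoc A B C = fstm A B ⊗ idm C.
Proof. by rewrite !fstmE !sndmE tensm_compr -comp_assoc -assoc_nat comp_assoc -triangle -tensm_compl. Qed.

Lemma sndm_assoc (A B C : ob D) : sndm A (tens B C) ∘ assoc A B C = sndm A B ⊗ idm C.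
Proof. by rewrite !sndmE -tensm_id -comp_assoc -assoc_nat comp_assoc lunit_assoc -tensm_compl. Qed.

Lemma fstm_assoc_inv (A B C : ob D) :
  fstm (tens A B) C ∘ assoc_inv A B C = idm A ⊗ fstm B C.
Proof. by rewrite -tensm_fstm_assoc -comp_assoc assoc_iso2 comp_id_r. Qed.

Lemma tensm_fstm_assoc_inv (A B C : ob D) :
  (fstm A B ⊗ idm C) ∘ assoc_inv A B C = idm A ⊗ sndm B C.
Proof. by rewrite -tensm_sndm_assoc -comp_assoc assoc_iso2 comp_id_r. Qed.

Lemma tensm_sndm_assoc_inv (A B C : ob D) :
  (sndm A B ⊗ idm C) ∘ assoc_inv A B C = sndm A (tens B C).
Proof. by rewrite -sndm_assoc -comp_assoc assoc_iso2 comp_id_r. Qed.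

Lemma fstm_assoc (A B C : ob D) :
  fstm A (tens B C) ∘ assoc A B C = fstm A B ∘ fstm (tens A B) C.
Proof. by rewrite -tensm_fstm_assoc comp_assoc fstm_tensm comp_id_l. Qed.

Lemma sndm_assoc_inv (A B C : ob D) :
  sndm (tens A B) C ∘ assoc_inv A B C = sndm B C ∘ sndm A (tens B C).
Proof. by rewrite -tensm_sndm_assoc_inv comp_assoc sndm_tensm comp_id_l. Qed.

Definition inner_swap (X Y : ob D) : hom D (tens X (tens Y Y)) (tens Y (tens X Y)) :=
  locked (assoc Y X Y ∘ ((braid X Y ⊗ idm Y) ∘ assoc_inv X Y Y)).

Lemma inner_swapE (X Y : ob D) :
  inner_swap X Y = assoc Y X Y ∘ ((braid X Y ⊗ idm Y) ∘ assoc_inv X Y Y).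
Proof. by rewrite /inner_swap -lock. Qed.

Lemma middle_swapE (X Y : ob D) : middle_swap X Y
  = assoc_inv X Y (tens X Y) ∘ ((idm X ⊗ inner_swap X Y) ∘ assoc X X (tens Y Y)).
Proof. by rewrite inner_swapE. Qed.

Lemma fstm_inner_swap (X Y : ob D) :
  fstm Y (tens X Y) ∘ inner_swap X Y = fstm Y Y ∘ sndm X (tens Y Y).
Proof.
rewrite inner_swapE (comp_assoc_eq (fstm_assoc _ _ _)) -!comp_assoc.
rewrite (comp_assoc_eq (fstm_tensm _ _)) -!comp_assoc fstm_assoc_inv.
by rewrite (comp_assoc_eq (fstm_braid _ _)) sndm_tensm.
Qed.

Lemma sndm_inner_swap (X Y : ob D) :
  sndm Y (tens X Y) ∘ inner_swap X Y = idm X ⊗ sndm Y Y.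
Proof.
rewrite inner_swapE (comp_assoc_eq (sndm_assoc _ _ _)) (comp_assoc_eq (comp_tensm _ _ _ _)).
by rewrite sndm_braid comp_id_l tensm_fstm_assoc_inv.
Qed.

Lemma tensm_fstm_inner_swap (X Y : ob D) :
  (idm Y ⊗ fstm X Y) ∘ inner_swap X Y = braid X Y ∘ (idm X ⊗ fstm Y Y).
Proof.
rewrite inner_swapE (comp_assoc_eq (tensm_fstm_assoc _ _ _)).
by rewrite (comp_assoc_eq (fstm_tensm _ _)) -comp_assoc fstm_assoc_inv.
Qed.

Lemma fstm_middle_swap (X Y : ob D) :
  fstm (tens X Y) (tens X Y) ∘ middle_swap X Y = fstm X X ⊗ fstm Y Y.
Proof.
rewrite middle_swapE (comp_assoc_eq (fstm_assoc_inv _ _ _)).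
rewrite (comp_assoc_eq (comp_tensm _ _ _ _)) comp_id_l fstm_inner_swap tensm_compr.
by rewrite -comp_assoc tensm_sndm_assoc comp_tensm comp_id_l comp_id_r.
Qed.

Lemma sndm_middle_swap (X Y : ob D) :
  sndm (tens X Y) (tens X Y) ∘ middle_swap X Y = sndm X X ⊗ sndm Y Y.
Proof.
rewrite middle_swapE (comp_assoc_eq (sndm_assoc_inv _ _ _)) -!comp_assoc.
rewrite (comp_assoc_eq (sndm_tensm _ _)) -!comp_assoc.
rewrite (comp_assoc_eq (sndm_inner_swap _ _)) sndm_assoc.
by rewrite comp_tensm comp_id_l comp_id_r.
Qed.

Lemma sndm_fstm_middle_swap (X Y : ob D) :
  (sndm X Y ⊗ fstm X Y) ∘ middle_swap X Y = braid X Y ∘ (sndm X X ⊗ fstm Y Y).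
Proof.
rewrite middle_swapE tensm_idl_idr -tensm_id -!comp_assoc.
rewrite (comp_assoc _ (assoc_inv _ _ _)) -assoc_inv_nat -comp_assoc.
rewrite (comp_assoc_eq (comp_tensm _ _ _ _)) comp_id_l tensm_fstm_inner_swap.
rewrite tensm_compr -!comp_assoc -assoc_nat (comp_assoc_eq (tensm_sndm_assoc_inv _ _ _)).
rewrite (comp_assoc_eq (sndm_tensm _ _)) -!comp_assoc (comp_assoc_eq (sndm_assoc _ _ _)).
by rewrite comp_tensm tensm_id comp_id_r comp_id_l.
Qed.

(** * Universal copies *)

Record universal_copy {X : ob D} (c : hom D X (tens X X)) : Prop := {
  fstm_copy : fstm X X ∘ c = idm X;
  sndm_copy : sndm X X ∘ c = idm X;
  copy_factor : forall (E : ob D) (pi : hom D X (tens X E)),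
    fstm X E ∘ pi = idm X -> exists h : hom D X E, pi = (idm X ⊗ h) ∘ c
}.
Arguments fstm_copy {X c}.
Arguments sndm_copy {X c}.
Arguments copy_factor {X c}.

Lemma tensm_copy_inj {X E : ob D} {c : hom D X (tens X X)} {h h' : hom D X E} :
  sndm X X ∘ c = idm X -> (idm X ⊗ h) ∘ c = (idm X ⊗ h') ∘ c -> h = h'.
Proof.
move=> sndc eq_hh'.
have: sndm X E ∘ ((idm X ⊗ h) ∘ c) = sndm X E ∘ ((idm X ⊗ h') ∘ c) by rewrite eq_hh'.
by rewrite !(comp_assoc_eq (sndm_tensm _ _)) -!comp_assoc sndc !comp_id_r.
Qed.

Lemma universal_copy_unique {X : ob D} {c d : hom D X (tens X X)} :
  universal_copy c -> fstm X X ∘ d = idm X -> sndm X X ∘ d = idm X -> d = c.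
Proof.
move=> [fstc sndc factor] fstd sndd.
have [h dE] := factor X d fstd.
move: sndd; rewrite dE (comp_assoc_eq (sndm_tensm _ _)) -comp_assoc sndc comp_id_r => ->.
by rewrite tensm_id comp_id_l.
Qed.

Lemma universal_copy_of_initial_dilation (X E : ob D) (iota : hom D X (tens X E)) :
  initial_dilation (idm X) iota -> non_creative (sndm X E ∘ iota) ->
  exists c : hom D X (tens X X), universal_copy c.
Proof.
move=> [/dilation_ofE fst_iota initial] nc_marg.
set m := sndm X E ∘ iota.
have dil_swap : dilation_of m (braid X E ∘ iota).
  by apply/dilation_ofE; rewrite comp_assoc fstm_braid.
have [io [/dilation_ofE fst_io swap_io]] := nc_marg X _ dil_swap.
have iotaE : iota = (idm X ⊗ m) ∘ (braid X X ∘ io).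
  by rewrite comp_assoc -braid_nat -comp_assoc -swap_io comp_assoc braid_sym comp_id_l.
exists (braid X X ∘ io); split.
- by rewrite -fst_iota iotaE (comp_assoc_eq (fstm_tensm _ _)) comp_id_l.
- by rewrite comp_assoc sndm_braid.
- move=> E' pi /dilation_ofE dil_pi.
  have [[f <-] _] := initial E' pi dil_pi.
  by exists (f ∘ m); rewrite {1}iotaE comp_assoc -tensm_compr.
Qed.

Lemma deterministic_idm (copy : forall X : ob D, hom D X (tens X X)) (X : ob D) :
  deterministic copy (idm X).
Proof. by rewrite /deterministic comp_id_r tensm_id comp_id_l. Qed.

Section UniversalCopy.
Context {copy : forall X : ob D, hom D X (tens X X)}.
Hypothesis copyU : forall X, universal_copy (copy X).

Lemma copy_comm (X : ob D) : braid X X ∘ copy X = copy X.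
Proof.
apply: universal_copy_unique (copyU X) _ _.
- by rewrite comp_assoc fstm_braid (sndm_copy (copyU X)).
- by rewrite comp_assoc sndm_braid (fstm_copy (copyU X)).
Qed.

Lemma copy_coassoc (X : ob D) :
  assoc X X X ∘ ((copy X ⊗ idm X) ∘ copy X) = (idm X ⊗ copy X) ∘ copy X.
Proof.
have [fstc sndc factor] := copyU X.
set L := assoc X X X ∘ _.
have fstL : fstm X (tens X X) ∘ L = idm X.
  rewrite /L (comp_assoc_eq (fstm_assoc _ _ _)) -!comp_assoc.
  by rewrite (comp_assoc_eq (fstm_tensm _ _)) -!comp_assoc fstc comp_id_r fstc.
have [k Lk] := factor _ _ fstL.
have marg_k (q : hom D (tens X X) X) :
    (idm X ⊗ q) ∘ L = (idm X ⊗ (q ∘ k)) ∘ copy X.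
  by rewrite Lk (comp_assoc_eq (comp_tensm _ _ _ _)) comp_id_l.
have fstk : fstm X X ∘ k = idm X.
  apply: (tensm_copy_inj sndc); rewrite -marg_k.
  rewrite /L (comp_assoc_eq (tensm_fstm_assoc _ _ _)) (comp_assoc_eq (fstm_tensm _ _)).
  by rewrite -comp_assoc fstc comp_id_r tensm_id comp_id_l.
have sndk : sndm X X ∘ k = idm X.
  apply: (tensm_copy_inj sndc); rewrite -marg_k.
  rewrite /L (comp_assoc_eq (tensm_sndm_assoc _ _ _)) (comp_assoc_eq (comp_tensm _ _ _ _)).
  by rewrite fstc comp_id_l tensm_id.
by rewrite -/L Lk (universal_copy_unique (copyU X) fstk sndk).
Qed.

Lemma universal_copy_Markov : is_Markov_copy copy.
Proof.
split; [|split; [|split; [|split; [|split]]]].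
- by move=> X; rewrite marginalE (sndm_copy (copyU X)).
- by move=> X; rewrite comp_assoc -fstmE (fstm_copy (copyU X)).
- exact: copy_coassoc.
- exact: copy_comm.
- move=> X Y; symmetry; apply: universal_copy_unique (copyU _) _ _.
  + by rewrite comp_assoc fstm_middle_swap comp_tensm !(fstm_copy (copyU _)) tensm_id.
  + by rewrite comp_assoc sndm_middle_swap comp_tensm !(sndm_copy (copyU _)) tensm_id.
- by move=> X Y; apply: hom_unit_eq.
Qed.

Lemma universal_copy_initial_dilation (X : ob D) : initial_dilation (idm X) (copy X).
Proof.
have [fstc sndc factor] := copyU X.
split; first exact/dilation_ofE.
move=> E' pi /dilation_ofE dil_pi; split.
- by have [h ->] := factor _ _ dil_pi; exists h.
- move=> f1 f2 <- eq_f12 F rho _.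
  by rewrite (tensm_copy_inj sndc eq_f12).
Qed.

Lemma deterministic_lifts_id_dilations {X Y : ob D} (f : hom D X Y) :
  deterministic copy f -> lifts_id_dilations f.
Proof.
move=> det_f E pi /dilation_ofE dil_pi.
have [h ->] := copy_factor (copyU Y) _ _ dil_pi.
exists ((idm X ⊗ (h ∘ f)) ∘ copy X); split.
- by apply/dilation_ofE; rewrite comp_assoc fstm_tensm comp_id_l (fstm_copy (copyU X)).
- rewrite -comp_assoc det_f !comp_assoc !comp_tensm.
  by rewrite !comp_id_l comp_id_r.
Qed.

Lemma lifts_id_dilations_deterministic {X Y : ob D} (f : hom D X Y) :
  lifts_id_dilations f -> deterministic copy f.
Proof.
move=> lifts_f.
have dil_copy : dilation_of (idm Y) (copy Y) by exact/dilation_ofE/fstm_copy.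
have [pi [/dilation_ofE fst_pi eq_pi]] := lifts_f Y _ dil_copy.
have [h pi_h] := copy_factor (copyU X) _ _ fst_pi.
have h_f : h = f.
  have := f_equal (comp (sndm Y Y)) eq_pi.
  rewrite comp_assoc (sndm_copy (copyU Y)) comp_id_l pi_h.
  rewrite (comp_assoc_eq (sndm_tensm _ _)) comp_id_l.
  by rewrite (comp_assoc_eq (sndm_tensm _ _)) -comp_assoc (sndm_copy (copyU X)) comp_id_r => ->.
rewrite /deterministic eq_pi pi_h h_f comp_assoc comp_tensm.
by rewrite comp_id_l comp_id_r.
Qed.

Lemma universal_copy_positive :
  (forall (X Y : ob D) (f : hom D X Y), deterministic copy f -> non_creative f) ->
  positive copy.
Proof.
move=> det_nc X Y Z f g det_gf.
set psi := (idm Y ⊗ g) ∘ (copy Y ∘ f).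
have fst_psi : fstm Y Z ∘ psi = f.
  by rewrite /psi comp_assoc fstm_tensm comp_id_l comp_assoc (fstm_copy (copyU Y)) comp_id_l.
have dil_swap : dilation_of (g ∘ f) (braid Y Z ∘ psi).
  apply/dilation_ofE; rewrite comp_assoc fstm_braid /psi comp_assoc sndm_tensm.
  by rewrite -comp_assoc (comp_assoc_eq (sndm_copy (copyU Y))) comp_id_l.
have [io [/dilation_ofE fst_io swap_io]] := det_nc _ _ _ det_gf _ _ dil_swap.
have [h io_h] := copy_factor (copyU X) _ _ fst_io.
have psiE : psi = (h ⊗ (g ∘ f)) ∘ copy X.
  rewrite -[psi]comp_id_l -(braid_sym Y Z) -comp_assoc swap_io io_h.
  rewrite (comp_assoc_eq (comp_tensm _ _ _ _)) comp_id_r comp_id_l comp_assoc.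
  by rewrite braid_nat -comp_assoc copy_comm.
have h_f : h = f.
  by rewrite -fst_psi psiE comp_assoc fstm_tensm -comp_assoc (fstm_copy (copyU X)) comp_id_r.
by rewrite psiE h_f.
Qed.

End UniversalCopy.

Section PositiveMarkov.
Context {copy : forall X : ob D, hom D X (tens X X)}.
Hypothesis copyM : is_Markov_copy copy.
Hypothesis copyP : positive copy.

Lemma Markov_fstm_copy (X : ob D) : fstm X X ∘ copy X = idm X.
Proof. by case: copyM => _ [counit_r _]; rewrite fstmE -comp_assoc counit_r. Qed.

Lemma Markov_sndm_copy (X : ob D) : sndm X X ∘ copy X = idm X.
Proof. by case: copyM => counit_l _; rewrite sndmE -comp_assoc counit_l. Qed.

Lemma Markov_swap_marginals (Y E : ob D) :
  (sndm Y E ⊗ fstm Y E) ∘ copy (tens Y E) = braid Y E.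
Proof.
case: copyM => _ [_ [_ [_ [copy_tens _]]]].
rewrite copy_tens (comp_assoc_eq (sndm_fstm_middle_swap _ _)) -comp_assoc.
by rewrite comp_tensm Markov_sndm_copy Markov_fstm_copy tensm_id comp_id_r.
Qed.

(* Positivity for [f := psi] and [g := fstm], followed by [sndm ⊗ id]. *)
Lemma positive_split {A Y E : ob D} (psi : hom D A (tens Y E)) :
  deterministic copy (fstm Y E ∘ psi) ->
  psi = ((fstm Y E ∘ psi) ⊗ (sndm Y E ∘ psi)) ∘ copy A.
Proof.
move=> /copyP /(f_equal (comp (sndm Y E ⊗ idm Y))).
rewrite (comp_assoc_eq (comp_tensm _ _ _ _)) comp_id_l comp_id_r comp_assoc.
rewrite Markov_swap_marginals comp_assoc comp_tensm comp_id_l => swap_psi.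
rewrite -[LHS]comp_id_l -(braid_sym Y E) -comp_assoc swap_psi.
case: copyM => _ [_ [_ [comm _]]].
by rewrite comp_assoc braid_nat -comp_assoc comm.
Qed.

Lemma positive_Markov_universal_copy (X : ob D) : universal_copy (copy X).
Proof.
split; [exact: Markov_fstm_copy | exact: Markov_sndm_copy |].
move=> E pi fst_pi; exists (sndm X E ∘ pi).
by rewrite {1}(positive_split pi) fst_pi //; apply: deterministic_idm.
Qed.

Lemma positive_Markov_deterministic_non_creative {X Y : ob D} (f : hom D X Y) :
  deterministic copy f -> non_creative f.
Proof.
move=> det_f E pi /dilation_ofE fst_pi.
rewrite -fst_pi in det_f.
exists ((idm X ⊗ (sndm Y E ∘ pi)) ∘ copy X); split.
- by apply/dilation_ofE; rewrite comp_assoc fstm_tensm comp_id_l Markov_fstm_copy.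
- rewrite {1}(positive_split pi det_f) fst_pi comp_assoc comp_tensm.
  by rewrite comp_id_l comp_id_r.
Qed.

End PositiveMarkov.
End Semicartesian.

Theorem corollary4p20 (D : SemicartSMC) :
  (exists copy : forall X : ob D, hom D X (tens X X),
      is_Markov_copy copy /\ positive copy)
  <->
  ((forall X : ob D, exists (E : ob D) (iota : hom D X (tens X E)),
       initial_dilation (idm X) iota /\
       non_creative (comp (lunit E) (comp (tensm (del X) (idm E)) iota))) /\
   (forall (X Y : ob D) (f : hom D X Y),
       lifts_id_dilations f -> non_creative f)).
Proof.
split.
- move=> [copy [copyM copyP]].
  have copyU := positive_Markov_universal_copy copyM copyP.
  split.
  + move=> X; exists X, (copy X); split; first exact: universal_copy_initial_dilation.
    rewrite marginalE (Markov_sndm_copy copyM).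
    exact/(positive_Markov_deterministic_non_creative copyM copyP)/deterministic_idm.
  + move=> X Y f /(lifts_id_dilations_deterministic copyU).
    exact: positive_Markov_deterministic_non_creative.
- move=> [initial lifts_nc].
  have exU (X : ob D) : exists c : hom D X (tens X X), universal_copy c.
    have [E [iota [iota_init]]] := initial X.
    rewrite marginalE; exact: universal_copy_of_initial_dilation.
  pose copy X := proj1_sig (constructive_indefinite_description _ (exU X)).
  have copyU X : universal_copy (copy X) := proj2_sig (constructive_indefinite_description _ _).
  exists copy; split; first exact: universal_copy_Markov.
  apply: (universal_copy_positive copyU) => X Y f det_f.
  exact/lifts_nc/(deterministic_lifts_id_dilations copyU).
Qed.
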